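(* Let $G=\mathbb{Z}_2\times\mathbb{Z}_4$ and let $\theta_1,\theta_2$ be normalised orthomorphisms of $G$ with $|A_{44}\cap A'_{44}|=1$. Then $\theta_1$ and $\theta_2$ are not orthogonal.
   Context: $G$ is written multiplicatively with identity $e$; $o(g)$ is the order of $g$. A normalised orthomorphism of $G$ is a bijection $\theta\colon G\to G$ with $\theta(e)=e$ such that $x\mapsto x^{-1}\theta(x)$ is a bijection of $G$. Two orthomorphisms are orthogonal if $x\mapsto\theta_1(x)^{-1}\theta_2(x)$ is a bijection of $G$. $A_{44}=\{x: o(x)=4, o(\theta_1(x))=4\}$ and $A'_{44}=\{x: o(x)=4, o(\theta_2(x))=4\}$. *)

From mathcomp Require Import all_boot all_fingroup all_algebra.
Set Implicit Arguments. Unset Strict Implicit. Unset Printing Implicit Defensive.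

Local Open Scope group_scope.

(* The group Z_2 x Z_4 (direct product of cyclic groups, as a finGroupType;
   the group law of each factor is addition mod n, written multiplicatively). *)
Definition Z2xZ4 : finGroupType := ('Z_2 * 'Z_4)%type.

Definition normalised_orthomorphism (gT : finGroupType) (theta : gT -> gT) : Prop :=
  bijective theta /\ theta 1 = 1 /\ bijective (fun x => x^-1 * theta x).

Definition orthogonal_orth (gT : finGroupType) (theta1 theta2 : gT -> gT) : Prop :=
  bijective (fun x => (theta1 x)^-1 * theta2 x).

Definition A44 (gT : finGroupType) (theta : gT -> gT) : {set gT} :=
  [set x | (#[x] == 4)%N && (#[theta x] == 4)%N].

From mathcomp Require Import all_boot all_fingroup all_algebra.
From mathcomp Require Import cyclic.

Set Implicit Arguments.
Unset Strict Implicit.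
Unset Printing Implicit Defensive.

(* The theorem is a finite statement about the group G = Z_2 x Z_4 of order 8,
   and we prove it by an exhaustive but certified search.

   A normalised orthomorphism theta is recorded by its graph, the sequence of
   pairs (x, theta x) with x running over a fixed enumeration of G.  Such a
   graph is built one pair at a time, and every prefix already satisfies the
   defining constraints: theta 1 = 1, the values theta x are pairwise distinct
   and so are the values x^-1 theta x.  A generic depth-bounded search that only
   extends prefixes by admissible steps is therefore complete: it reaches the
   graph of every normalised orthomorphism (lemma [orthomorphism_graph_found]).

   For G the search produces an explicit list of 48 candidate graphs, and a
   computation ([no_orthogonal_pair_sharing_one_A44]) checks that no two of them
   are orthogonal while having exactly one common element of order 4 whose two
   images both have order 4.  Since G has exponent 4, an element has order 4
   exactly when its square is not 1 ([order4E]), which makes A44 computable,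
   and the theorem follows by translating its hypotheses into this check. *)

Section PrefixSearch.
Variables (T : eqType) (admissible : seq T -> T -> bool)
          (candidates : seq T -> seq T).

Fixpoint extensions (s : seq T) (n : nat) : seq (seq T) :=
  if n is n'.+1 then
    flatten [seq extensions (rcons s a) n' | a <- candidates s & admissible s a]
  else [:: s].

Lemma extensions_complete (x0 : T) (u s : seq T) :
  (forall k, k < size u ->
     let p := s ++ take k u in
     (nth x0 u k \in candidates p) && admissible p (nth x0 u k)) ->
  s ++ u \in extensions s (size u).
Proof.
elim: u s => [|a u IHu] s legal /=; first by rewrite cats0 mem_seq1.
apply/flatten_mapP; exists a.
  by rewrite mem_filter andbC; have := legal 0; rewrite /= cats0; apply.
rewrite -cat_rcons; apply: IHu => k lt_k_u.
by have := legal k.+1; rewrite /= cat_rcons; apply.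
Qed.
End PrefixSearch.

Lemma nth_notin_take (T : eqType) (s : seq T) (x0 : T) (k : nat) :
  uniq s -> k < size s -> nth x0 s k \notin take k s.
Proof.
move=> uniq_s lt_k_s.
have := take_uniq k.+1 uniq_s.
by rewrite (take_nth x0 lt_k_s) rcons_uniq => /andP[].
Qed.

Local Open Scope group_scope.

Lemma order4E (gT : finGroupType) (x : gT) :
  x ^+ 4 = 1 -> (#[x] == 4)%N = (x ^+ 2 != 1).
Proof.
move=> x4; have dvd_ord_4 : (#[x] %| 4)%N by rewrite order_dvdn x4.
have := dvdn_leq (isT : 0 < 4)%N dvd_ord_4; have := order_gt0 x.
rewrite -order_dvdn; by move: dvd_ord_4; case: #[x] => [|[|[|[|[|m]]]]].
Qed.

Section OrthomorphismSearch.
Variables (gT : finGroupType) (elems : seq gT).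
Hypotheses (uniq_elems : uniq elems) (mem_elems : forall x, x \in elems).

Definition graph (theta : gT -> gT) : seq (gT * gT) :=
  [seq (x, theta x) | x <- elems].

Definition orth_admissible (s : seq (gT * gT)) (a : gT * gT) : bool :=
  ((a.1 == 1) ==> (a.2 == 1)) &&
  all (fun b => (a.2 != b.2) && (a.1^-1 * a.2 != b.1^-1 * b.2)) s.

Definition orth_candidates (s : seq (gT * gT)) : seq (gT * gT) :=
  [seq (nth 1 elems (size s), y) | y <- elems].

Definition orthomorphism_graphs : seq (seq (gT * gT)) :=
  extensions orth_admissible orth_candidates [::] (size elems).

Lemma injective_fresh (f : gT -> gT) (k : nat) :
  injective f -> k < size elems ->
  all (fun x => f (nth 1 elems k) != f x) (take k elems).
Proof.
move=> inj_f lt_k; apply/allP=> x x_before.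
by apply: contraNneq (nth_notin_take 1 uniq_elems lt_k) => /inj_f ->.
Qed.

Lemma orthomorphism_graph_found (theta : gT -> gT) :
  normalised_orthomorphism theta -> graph theta \in orthomorphism_graphs.
Proof.
case=> bij_theta [theta_id bij_diff].
have size_graph : size (graph theta) = size elems by rewrite size_map.
rewrite /orthomorphism_graphs -size_graph.
apply: (@extensions_complete _ _ _ (1, 1) (graph theta) [::]) => k lt_k /=.
rewrite size_graph in lt_k.
rewrite /orth_candidates size_takel ?size_graph 1?ltnW //.
rewrite /graph (nth_map 1) // -map_take.
apply/andP; split; first exact: map_f.
rewrite /orth_admissible; apply/andP; split.
  by apply/implyP=> /= /eqP ->; rewrite theta_id.
rewrite all_map; apply/allP=> x x_before /=.
have fresh (f : gT -> gT) (inj_f : injective f) : f (nth 1 elems k) != f x.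
  exact: (allP (injective_fresh inj_f lt_k) x x_before).
rewrite (fresh _ (bij_inj bij_theta)).
exact: (fresh (fun x => x^-1 * theta x) (bij_inj bij_diff)).
Qed.

Definition orthogonal_graphs (g1 g2 : seq (gT * gT)) : bool :=
  uniq [seq p.1.2^-1 * p.2.2 | p <- zip g1 g2].

Lemma orthogonal_graphsP (theta1 theta2 : gT -> gT) :
  orthogonal_orth theta1 theta2 ->
  orthogonal_graphs (graph theta1) (graph theta2).
Proof.
move=> /bij_inj inj_quot.
by rewrite /orthogonal_graphs zip_map -map_comp map_inj_uniq.
Qed.

(* Whether x^2 differs from 1; in a group of exponent 4 this says #[x] = 4. *)
Definition square_nontrivial (x : gT) : bool := x ^+ 2 != 1.

Definition shared_order4_count (g1 g2 : seq (gT * gT)) : nat :=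
  count (fun p => [&& square_nontrivial p.1.1, square_nontrivial p.1.2
                    & square_nontrivial p.2.2]) (zip g1 g2).

Lemma card_along_elems (A : {set gT}) : #|A| = count (mem A) elems.
Proof.
rewrite -size_filter -(card_uniqP (filter_uniq _ uniq_elems)).
by apply: eq_card => x; rewrite mem_filter mem_elems andbT.
Qed.

Lemma card_A44_shared (theta1 theta2 : gT -> gT) :
  (forall x : gT, x ^+ 4 = 1) ->
  #|A44 theta1 :&: A44 theta2| =
    shared_order4_count (graph theta1) (graph theta2).
Proof.
move=> exponent4.
rewrite card_along_elems /shared_order4_count zip_map count_map.
apply: eq_count => x /=; rewrite !inE !order4E //.
by rewrite andbACA andbb.
Qed.
End OrthomorphismSearch.

Definition Z2xZ4_elems : seq Z2xZ4 :=
  [seq (i, j) | i <- [:: @Ordinal 2 0 isT; @Ordinal 2 1 isT],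
                j <- [:: @Ordinal 4 0 isT; @Ordinal 4 1 isT;
                         @Ordinal 4 2 isT; @Ordinal 4 3 isT]].

Lemma uniq_Z2xZ4_elems : uniq Z2xZ4_elems.
Proof. by vm_compute. Qed.

Lemma mem_Z2xZ4_elems (x : Z2xZ4) : x \in Z2xZ4_elems.
Proof.
case: x => [[[|[|i]] lt_i] [[|[|[|[|j]]]] lt_j]] //;
by apply: allpairs_f; rewrite !inE -!val_eqE.
Qed.

Lemma Z2xZ4_exponent4 (x : Z2xZ4) : x ^+ 4 = 1.
Proof.
apply/eqP; move: x (mem_Z2xZ4_elems x); apply/allP; by vm_compute.
Qed.

Lemma no_orthogonal_pair_sharing_one_A44 :
  let graphs := orthomorphism_graphs Z2xZ4_elems in
  all (fun g1 => all (fun g2 =>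
         orthogonal_graphs g1 g2 ==> (shared_order4_count g1 g2 != 1%N))
       graphs) graphs.
Proof. by vm_compute. Qed.

Theorem proposition3 (theta1 theta2 : Z2xZ4 -> Z2xZ4) :
  normalised_orthomorphism theta1 ->
  normalised_orthomorphism theta2 ->
  #|A44 theta1 :&: A44 theta2| = 1%N ->
  ~ orthogonal_orth theta1 theta2.
Proof.
move=> orth1 orth2 shared_one ortho12.
have found := orthomorphism_graph_found uniq_Z2xZ4_elems mem_Z2xZ4_elems.
have := allP (allP no_orthogonal_pair_sharing_one_A44 _ (found _ orth1)) _
             (found _ orth2).
rewrite (orthogonal_graphsP uniq_Z2xZ4_elems ortho12).
rewrite -(card_A44_shared uniq_Z2xZ4_elems mem_Z2xZ4_elems _ _ Z2xZ4_exponent4).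
by rewrite shared_one.
Qed.
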